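(* Let $a_0,a_1,a_2,a_3\in\mathbb{R}$ and consider the binary quartic form $$f(x,y)=-x^4+a_3x^3y+a_2x^2y^2+a_1xy^3+a_0y^4 .$$ Let $$b_0=\tfrac14\,(-a_1^2-a_1a_2a_3+a_0a_3^2),\quad b_1=-\tfrac14\,(4a_0+a_2^2+a_1a_3),\quad b_2=-\tfrac{a_2}{2},\quad \lambda_0=\frac{4b_2+2\sqrt{3b_1+4b_2^2}}{3}.$$ Then $f$ is negative semi-definite if and only if $\lambda_0$ is real and $$\lambda_0\ge \frac{a_3^2}{4},\qquad -\tfrac14\lambda_0^3+b_2\lambda_0^2+b_1\lambda_0+b_0\ge 0 .$$ Moreover, $f$ is negative definite if and only if $\lambda_0$ is real and $$\lambda_0> \frac{a_3^2}{4},\qquad -\tfrac14\lambda_0^3+b_2\lambda_0^2+b_1\lambda_0+b_0> 0 .$$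
   Context: A binary form $f(x,y)$ with real coefficients is negative definite (resp. negative semi-definite) if $f(x,y)<0$ (resp. $f(x,y)\le 0$) for all real $x,y$ not both zero. The quantity $\lambda_0$ is real exactly when $3b_1+4b_2^2\ge 0$. *)

From Stdlib Require Import Reals.
Open Scope R_scope.

Definition quartic (a0 a1 a2 a3 x y : R) : R :=
  - x ^ 4 + a3 * x ^ 3 * y + a2 * x ^ 2 * y ^ 2 + a1 * x * y ^ 3 + a0 * y ^ 4.

Definition neg_definite (f : R -> R -> R) : Prop :=
  forall x y : R, ~ (x = 0 /\ y = 0) -> f x y < 0.
Definition neg_semidefinite (f : R -> R -> R) : Prop :=
  forall x y : R, ~ (x = 0 /\ y = 0) -> f x y <= 0.

Definition b0 (a0 a1 a2 a3 : R) : R := / 4 * (- a1 ^ 2 - a1 * a2 * a3 + a0 * a3 ^ 2).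
Definition b1 (a0 a1 a2 a3 : R) : R := - (/ 4) * (4 * a0 + a2 ^ 2 + a1 * a3).
Definition b2 (a0 a1 a2 a3 : R) : R := - (a2 / 2).

(* discriminant-like quantity: lambda0 is real exactly when it is >= 0 *)
Definition lam_disc (a0 a1 a2 a3 : R) : R :=
  3 * b1 a0 a1 a2 a3 + 4 * (b2 a0 a1 a2 a3) ^ 2.

(* lambda0 (only meaningful when lam_disc >= 0, which is always required) *)
Definition lambda0 (a0 a1 a2 a3 : R) : R :=
  (4 * b2 a0 a1 a2 a3 + 2 * sqrt (lam_disc a0 a1 a2 a3)) / 3.

Definition cubic_val (a0 a1 a2 a3 l : R) : R :=
  - (/ 4) * l ^ 3 + b2 a0 a1 a2 a3 * l ^ 2 + b1 a0 a1 a2 a3 * l + b0 a0 a1 a2 a3.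

From Stdlib Require Import Reals Lra Psatz.
From Coquelicot Require Import Coquelicot.
Open Scope R_scope.

(* Completing the square, for every [l]
     - f(x, y) = (x^2 - a3/2 x y - (l + a2)/2 y^2)^2 + y^2 Q_l(x, y),
   where the binary quadratic form Q_l has leading coefficient l - a3^2/4 and
   discriminant -4 c(l), c being the cubic -l^3/4 + b2 l^2 + b1 l + b0.  At the
   larger critical point lambda0 of c the stated conditions make Q_lambda0
   semidefinite (resp. definite), which gives sufficiency.
   Conversely, let t minimise h = - f(., 1) and l = 2 t^2 - a3 t - a2.  Then
     h(s) - h(t) = (s - t)^2 ((s - (a3 - 2 t)/2)^2 + l - a3^2/4),
   so l >= a3^2/4, while c'(l) = h(t) and c(l) = (l - a3^2/4) h(t).  If h(t) >= 0
   then l lies between the critical points of c, hence l <= lambda0 and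
   c(lambda0) >= c(l) >= 0; strict inequalities propagate in the same way. *)

Section Cubic.

Variables c0 c1 c2 : R.

Definition cubic (l : R) : R := - (/ 4) * l ^ 3 + c2 * l ^ 2 + c1 * l + c0.
Definition cubic_deriv (l : R) : R := - (3 / 4) * l ^ 2 + 2 * c2 * l + c1.
Definition cubic_disc : R := 3 * c1 + 4 * c2 ^ 2.
Definition cubic_crit : R := (4 * c2 + 2 * sqrt cubic_disc) / 3.

Lemma cubic_disc_nonneg x : 0 <= cubic_deriv x -> 0 <= cubic_disc.
Proof.
  intro Hx.
  assert (E : cubic_disc = 3 * cubic_deriv x + (3 * x / 2 - 2 * c2) ^ 2)
    by (unfold cubic_disc, cubic_deriv; field).
  pose proof (pow2_ge_0 (3 * x / 2 - 2 * c2)). lra.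
Qed.

Lemma cubic_deriv_crit : 0 <= cubic_disc -> cubic_deriv cubic_crit = 0.
Proof.
  intro Hd. pose proof (sqrt_sqrt _ Hd) as Hs.
  unfold cubic_deriv, cubic_crit in *. unfold cubic_disc in *.
  set (s := sqrt _) in *. nra.
Qed.

Lemma cubic_le_crit x : 0 <= cubic_deriv x ->
  x <= cubic_crit /\ cubic x <= cubic cubic_crit /\
  (0 < cubic_deriv x -> x < cubic_crit /\ cubic x < cubic cubic_crit).
Proof.
  intro Hx. pose proof (cubic_disc_nonneg x Hx) as Hd.
  pose proof (sqrt_sqrt _ Hd) as Hs. pose proof (sqrt_pos cubic_disc) as Hs0.
  unfold cubic_crit, cubic, cubic_deriv in *. unfold cubic_disc in *.
  set (s := sqrt _) in *. clearbody s.
  assert (Ec1 : c1 = (s * s - 4 * c2 ^ 2) / 3) by lra. subst c1.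
  set (r := (4 * c2 + 2 * s) / 3). set (q := (4 * c2 - 2 * s) / 3).
  assert (Ed : forall y, - (3 / 4) * y ^ 2 + 2 * c2 * y + (s * s - 4 * c2 ^ 2) / 3
                         = - (3 / 4) * (y - r) * (y - q))
    by (intro; unfold r, q; field).
  assert (Ec : (- / 4 * r ^ 3 + c2 * r ^ 2 + (s * s - 4 * c2 ^ 2) / 3 * r + c0)
               - (- / 4 * x ^ 3 + c2 * x ^ 2 + (s * s - 4 * c2 ^ 2) / 3 * x + c0)
               = (r - x) ^ 2 * (r + 2 * x - 3 * q) / 8)
    by (unfold r, q; field).
  rewrite Ed in Hx |- *. fold r.
  assert (Hrq : q <= r) by (unfold r, q; lra).
  assert (Hqx : q <= x) by nra.
  assert (Hxr : x <= r) by nra.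
  split; [exact Hxr | split].
  - assert (0 <= (r - x) ^ 2 * (r + 2 * x - 3 * q)) by (apply Rmult_le_pos; nra).
    lra.
  - intro Hpos.
    assert (x < r) by nra. assert (q < x) by nra.
    assert (0 < (r - x) ^ 2 * (r + 2 * x - 3 * q)) by (apply Rmult_lt_0_compat; nra).
    split; lra.
Qed.

End Cubic.

Lemma pow2_pos (y : R) : y <> 0 -> 0 < y ^ 2.
Proof. rewrite <- Rsqr_pow2. exact (Rsqr_pos_lt y). Qed.

Definition binary_quad (A B C x y : R) : R := A * x ^ 2 + B * x * y + C * y ^ 2.

Lemma binary_quad_scaled A B C x y :
  4 * A * binary_quad A B C x y = (2 * A * x + B * y) ^ 2 + (4 * A * C - B ^ 2) * y ^ 2.
Proof. unfold binary_quad. ring. Qed.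

Lemma binary_quad_nonneg A B C x y :
  0 <= A -> 0 <= C -> B ^ 2 <= 4 * A * C -> 0 <= binary_quad A B C x y.
Proof.
  intros HA HC HD. destruct (Req_dec A 0) as [->|HA0].
  - assert (B = 0) by nra. subst B. unfold binary_quad.
    pose proof (pow2_ge_0 y). nra.
  - pose proof (binary_quad_scaled A B C x y).
    pose proof (pow2_ge_0 (2 * A * x + B * y)). pose proof (pow2_ge_0 y).
    assert (0 <= (4 * A * C - B ^ 2) * y ^ 2) by (apply Rmult_le_pos; lra).
    nra.
Qed.

Lemma binary_quad_pos A B C x y :
  0 < A -> B ^ 2 < 4 * A * C -> y <> 0 -> 0 < binary_quad A B C x y.
Proof.
  intros HA HD Hy. pose proof (binary_quad_scaled A B C x y).
  pose proof (pow2_ge_0 (2 * A * x + B * y)).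
  assert (0 < y ^ 2) by (apply pow2_pos; exact Hy).
  assert (0 < (4 * A * C - B ^ 2) * y ^ 2) by (apply Rmult_lt_0_compat; lra).
  nra.
Qed.

Lemma coercive_has_min (f : R -> R) (M : R) :
  (forall t, continuity_pt f t) -> (forall t, M <= Rabs t -> f 0 < f t) ->
  exists ts, forall t, f ts <= f t.
Proof.
  intros Hf Hcoer.
  pose proof (Rle_abs M). pose proof (Rabs_pos M).
  destruct (continuity_ab_min f (- Rabs M) (Rabs M)) as [ts Hts].
  - lra.
  - intros t _. apply Hf.
  - exists ts. intro t.
    destruct (Rle_or_lt (Rabs M) (Rabs t)) as [Ht|Ht].
    + assert (f ts <= f 0) by (apply Hts; lra).
      pose proof (Hcoer t ltac:(lra)). lra.
    + apply Hts. apply Rabs_def2 in Ht. lra.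
Qed.

Lemma sq_mul_shifted_sq_nonneg (t0 c k : R) :
  (forall t, 0 <= (t - t0) ^ 2 * ((t - c) ^ 2 + k)) -> 0 <= k.
Proof.
  intro H. destruct (Rle_or_lt 0 k) as [Hk|Hk]; [exact Hk|exfalso].
  set (e := sqrt (- k) / 2).
  assert (He : 0 < e) by (apply Rdiv_lt_0_compat; [apply sqrt_lt_R0|]; lra).
  assert (Ee : e ^ 2 = - k / 4)
    by (pose proof (sqrt_sqrt (- k)); unfold e; nra).
  pose proof (H c) as Hc. pose proof (H (c + e)) as Hce.
  replace ((c - c) ^ 2 + k) with k in Hc by ring.
  replace ((c + e - c) ^ 2 + k) with (3 / 4 * k) in Hce by lra.
  assert (Hc0 : (c - t0) ^ 2 <= 0) by nra.
  assert (Hce0 : (c + e - t0) ^ 2 <= 0) by nra.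
  pose proof (pow2_ge_0 ((c + e - t0) + (c - t0))).
  nra.
Qed.

Section Decomposition.

Variables a0 a1 a2 a3 : R.

Definition sos_A (l : R) : R := l - a3 ^ 2 / 4.
Definition sos_B (l : R) : R := - a3 * (l + a2) / 2 - a1.
Definition sos_C (l : R) : R := - a0 - (l + a2) ^ 2 / 4.

Lemma neg_quartic_sos l x y :
  - quartic a0 a1 a2 a3 x y =
  (x ^ 2 - a3 / 2 * x * y - (l + a2) / 2 * y ^ 2) ^ 2
  + y ^ 2 * binary_quad (sos_A l) (sos_B l) (sos_C l) x y.
Proof. unfold quartic, binary_quad, sos_A, sos_B, sos_C. field. Qed.

Lemma sos_disc l : sos_B l ^ 2 - 4 * sos_A l * sos_C l = - 4 * cubic_val a0 a1 a2 a3 l.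
Proof. unfold sos_A, sos_B, sos_C, cubic_val, b0, b1, b2. field. Qed.

Lemma cubic_deriv_sos l :
  cubic_deriv (b1 a0 a1 a2 a3) (b2 a0 a1 a2 a3) l
  = a3 * sos_B l / 4 + sos_C l - sos_A l * (l + a2) / 2.
Proof. unfold cubic_deriv, sos_A, sos_B, sos_C, b1, b2. field. Qed.

Lemma lam_disc_cubic_disc :
  lam_disc a0 a1 a2 a3 = cubic_disc (b1 a0 a1 a2 a3) (b2 a0 a1 a2 a3).
Proof. reflexivity. Qed.

Lemma lambda0_cubic_crit :
  lambda0 a0 a1 a2 a3 = cubic_crit (b1 a0 a1 a2 a3) (b2 a0 a1 a2 a3).
Proof. reflexivity. Qed.

Lemma cubic_val_cubic l :
  cubic_val a0 a1 a2 a3 l = cubic (b0 a0 a1 a2 a3) (b1 a0 a1 a2 a3) (b2 a0 a1 a2 a3) l.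
Proof. reflexivity. Qed.

Lemma sos_C_lambda0_nonneg :
  0 <= lam_disc a0 a1 a2 a3 -> a3 ^ 2 / 4 <= lambda0 a0 a1 a2 a3 ->
  0 <= cubic_val a0 a1 a2 a3 (lambda0 a0 a1 a2 a3) -> 0 <= sos_C (lambda0 a0 a1 a2 a3).
Proof.
  intros Hd HA Hc.
  pose proof (sos_disc (lambda0 a0 a1 a2 a3)) as Edisc.
  pose proof (cubic_deriv_sos (lambda0 a0 a1 a2 a3)) as Ederiv.
  rewrite lam_disc_cubic_disc in Hd. rewrite lambda0_cubic_crit in *.
  rewrite (cubic_deriv_crit _ _ Hd) in Ederiv.
  unfold sos_A in *. set (L := cubic_crit _ _) in *.
  set (B := sos_B L) in *. set (C := sos_C L) in *.
  destruct (Req_dec L (a3 ^ 2 / 4)) as [HL|HL].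
  (* Degenerate form: B vanishes too, and then [cubic_deriv L = 0] forces [C = 0]. *)
  - assert (B = 0) by nra. rewrite HL in Ederiv. nra.
  - nra.
Qed.

End Decomposition.

Lemma neg_semidefinite_of_lambda0 a0 a1 a2 a3 :
  0 <= lam_disc a0 a1 a2 a3 -> a3 ^ 2 / 4 <= lambda0 a0 a1 a2 a3 ->
  0 <= cubic_val a0 a1 a2 a3 (lambda0 a0 a1 a2 a3) ->
  neg_semidefinite (quartic a0 a1 a2 a3).
Proof.
  intros Hdisc HA Hc x y _.
  set (L := lambda0 a0 a1 a2 a3) in *.
  assert (Hq : 0 <= binary_quad (sos_A a3 L) (sos_B a1 a2 a3 L) (sos_C a0 a2 L) x y).
  { apply binary_quad_nonneg.
    - unfold sos_A. lra.
    - exact (sos_C_lambda0_nonneg a0 a1 a2 a3 Hdisc HA Hc).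
    - pose proof (sos_disc a0 a1 a2 a3 L). lra. }
  pose proof (neg_quartic_sos a0 a1 a2 a3 L x y).
  pose proof (pow2_ge_0 (x ^ 2 - a3 / 2 * x * y - (L + a2) / 2 * y ^ 2)).
  pose proof (pow2_ge_0 y).
  nra.
Qed.

Lemma neg_definite_of_lambda0 a0 a1 a2 a3 :
  a3 ^ 2 / 4 < lambda0 a0 a1 a2 a3 -> 0 < cubic_val a0 a1 a2 a3 (lambda0 a0 a1 a2 a3) ->
  neg_definite (quartic a0 a1 a2 a3).
Proof.
  intros HA Hc x y Hxy.
  destruct (Req_dec y 0) as [->|Hy].
  - assert (Hx : x <> 0) by (intro; apply Hxy; split; [assumption|reflexivity]).
    pose proof (pow2_pos x Hx).
    unfold quartic. nra.
  - set (L := lambda0 a0 a1 a2 a3) in *.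
    assert (Hq : 0 < binary_quad (sos_A a3 L) (sos_B a1 a2 a3 L) (sos_C a0 a2 L) x y).
    { apply binary_quad_pos; [unfold sos_A; lra| |exact Hy].
      pose proof (sos_disc a0 a1 a2 a3 L). lra. }
    pose proof (neg_quartic_sos a0 a1 a2 a3 L x y).
    pose proof (pow2_ge_0 (x ^ 2 - a3 / 2 * x * y - (L + a2) / 2 * y ^ 2)).
    pose proof (pow2_pos y Hy).
    nra.
Qed.

Section Necessity.

Variables a0 a1 a2 a3 : R.

Definition neg_dehom (t : R) : R := - quartic a0 a1 a2 a3 t 1.

Lemma neg_dehom_derive t :
  derivable_pt_lim neg_dehom t (4 * t ^ 3 - 3 * a3 * t ^ 2 - 2 * a2 * t - a1).
Proof.
  apply is_derive_Reals. unfold neg_dehom, quartic. auto_derive; [exact I|]. ring.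
Qed.

Lemma neg_dehom_coercive t :
  1 + Rabs a1 + Rabs a2 + Rabs a3 <= Rabs t -> neg_dehom 0 < neg_dehom t.
Proof.
  intro Ht. set (s := Rabs t) in *.
  pose proof (Rabs_pos a1). pose proof (Rabs_pos a2). pose proof (Rabs_pos a3).
  assert (E3 : Rabs (a3 * t ^ 3) = Rabs a3 * s ^ 3)
    by (rewrite Rabs_mult, <- RPow_abs; reflexivity).
  assert (E2 : Rabs (a2 * t ^ 2) = Rabs a2 * s ^ 2)
    by (rewrite Rabs_mult, <- RPow_abs; reflexivity).
  assert (E1 : Rabs (a1 * t) = Rabs a1 * s) by apply Rabs_mult.
  assert (E4 : t ^ 4 = s ^ 4)
    by (replace (t ^ 4) with ((t ^ 2) ^ 2) by ring; unfold s; rewrite <- (pow2_abs t); ring).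
  pose proof (Rle_abs (a3 * t ^ 3)). pose proof (Rle_abs (a2 * t ^ 2)).
  pose proof (Rle_abs (a1 * t)).
  assert (s ^ 2 <= s ^ 3) by nra. assert (s <= s ^ 3) by nra.
  assert (0 < s ^ 3) by (apply pow_lt; lra).
  assert ((Rabs a1 + Rabs a2 + Rabs a3) * s ^ 3 < s ^ 4) by nra.
  unfold neg_dehom, quartic. nra.
Qed.

Lemma neg_dehom_has_min : exists ts, forall t, neg_dehom ts <= neg_dehom t.
Proof.
  apply (coercive_has_min _ (1 + Rabs a1 + Rabs a2 + Rabs a3)).
  - intro t. apply derivable_continuous_pt. eexists. apply neg_dehom_derive.
  - exact neg_dehom_coercive.
Qed.

Lemma neg_dehom_min_critical ts :
  (forall t, neg_dehom ts <= neg_dehom t) -> a1 = 4 * ts ^ 3 - 3 * a3 * ts ^ 2 - 2 * a2 * ts.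
Proof.
  intro Hmin.
  pose (pr := exist _ _ (neg_dehom_derive ts) : derivable_pt neg_dehom ts).
  assert (D0 : derive_pt neg_dehom ts pr = 0)
    by (apply (deriv_minimum _ (ts - 1) (ts + 1)); [lra|lra|intros; apply Hmin]).
  assert (D1 : derive_pt neg_dehom ts pr = 4 * ts ^ 3 - 3 * a3 * ts ^ 2 - 2 * a2 * ts - a1)
    by apply derive_pt_eq_0, neg_dehom_derive.
  lra.
Qed.

Lemma quartic_min_witness : exists ts l,
  a3 ^ 2 / 4 <= l /\
  cubic_deriv (b1 a0 a1 a2 a3) (b2 a0 a1 a2 a3) l = - quartic a0 a1 a2 a3 ts 1 /\
  cubic_val a0 a1 a2 a3 l = (l - a3 ^ 2 / 4) * - quartic a0 a1 a2 a3 ts 1.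
Proof.
  destruct neg_dehom_has_min as [ts Hmin].
  pose proof (neg_dehom_min_critical ts Hmin) as Ea1.
  set (l := 2 * ts ^ 2 - a3 * ts - a2).
  exists ts, l. split; [|split].
  - assert (Hfac : forall t, neg_dehom t - neg_dehom ts
                             = (t - ts) ^ 2 * ((t - (a3 - 2 * ts) / 2) ^ 2 + (l - a3 ^ 2 / 4)))
      by (intro; unfold neg_dehom, quartic, l; rewrite Ea1; field).
    enough (0 <= l - a3 ^ 2 / 4) by lra.
    apply (sq_mul_shifted_sq_nonneg ts ((a3 - 2 * ts) / 2)). intro t.
    rewrite <- Hfac. pose proof (Hmin t). lra.
  - unfold cubic_deriv, b1, b2, quartic, l. rewrite Ea1. field.
  - unfold cubic_val, b0, b1, b2, quartic, l. rewrite Ea1. field.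
Qed.

End Necessity.

Lemma lambda0_of_neg_semidefinite a0 a1 a2 a3 :
  neg_semidefinite (quartic a0 a1 a2 a3) ->
  0 <= lam_disc a0 a1 a2 a3 /\ a3 ^ 2 / 4 <= lambda0 a0 a1 a2 a3 /\
  0 <= cubic_val a0 a1 a2 a3 (lambda0 a0 a1 a2 a3).
Proof.
  intro Hneg.
  destruct (quartic_min_witness a0 a1 a2 a3) as (ts & l & Hl & Ederiv & Eval).
  assert (Hf : quartic a0 a1 a2 a3 ts 1 <= 0) by (apply Hneg; lra).
  assert (Hd : 0 <= cubic_deriv (b1 a0 a1 a2 a3) (b2 a0 a1 a2 a3) l) by lra.
  destruct (cubic_le_crit (b0 a0 a1 a2 a3) _ _ l Hd) as (Hle & Hcle & _).
  assert (0 <= cubic_val a0 a1 a2 a3 l) by (rewrite Eval; apply Rmult_le_pos; lra).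
  rewrite lam_disc_cubic_disc, lambda0_cubic_crit, cubic_val_cubic in *.
  split; [exact (cubic_disc_nonneg _ _ l Hd)|]. split; lra.
Qed.

Lemma lambda0_of_neg_definite a0 a1 a2 a3 :
  neg_definite (quartic a0 a1 a2 a3) ->
  0 <= lam_disc a0 a1 a2 a3 /\ a3 ^ 2 / 4 < lambda0 a0 a1 a2 a3 /\
  0 < cubic_val a0 a1 a2 a3 (lambda0 a0 a1 a2 a3).
Proof.
  intro Hneg.
  destruct (quartic_min_witness a0 a1 a2 a3) as (ts & l & Hl & Ederiv & Eval).
  assert (Hf : quartic a0 a1 a2 a3 ts 1 < 0) by (apply Hneg; lra).
  assert (Hd : 0 < cubic_deriv (b1 a0 a1 a2 a3) (b2 a0 a1 a2 a3) l) by lra.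
  destruct (cubic_le_crit (b0 a0 a1 a2 a3) _ _ l (Rlt_le _ _ Hd)) as (_ & _ & Hstrict).
  destruct (Hstrict Hd) as [Hlt Hclt].
  assert (0 <= cubic_val a0 a1 a2 a3 l) by (rewrite Eval; apply Rmult_le_pos; lra).
  rewrite lam_disc_cubic_disc, lambda0_cubic_crit, cubic_val_cubic in *.
  split; [exact (cubic_disc_nonneg _ _ l (Rlt_le _ _ Hd))|]. split; lra.
Qed.

Theorem corollary2 (a0 a1 a2 a3 : R) :
  (neg_semidefinite (quartic a0 a1 a2 a3) <->
     (0 <= lam_disc a0 a1 a2 a3 /\
      a3 ^ 2 / 4 <= lambda0 a0 a1 a2 a3 /\
      0 <= cubic_val a0 a1 a2 a3 (lambda0 a0 a1 a2 a3)))
  /\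
  (neg_definite (quartic a0 a1 a2 a3) <->
     (0 <= lam_disc a0 a1 a2 a3 /\
      a3 ^ 2 / 4 < lambda0 a0 a1 a2 a3 /\
      0 < cubic_val a0 a1 a2 a3 (lambda0 a0 a1 a2 a3))).
Proof.
  split; split.
  - apply lambda0_of_neg_semidefinite.
  - intros (Hd & HA & Hc). exact (neg_semidefinite_of_lambda0 _ _ _ _ Hd HA Hc).
  - apply lambda0_of_neg_definite.
  - intros (_ & HA & Hc). exact (neg_definite_of_lambda0 _ _ _ _ HA Hc).
Qed.
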